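(* Let $c,k\in\mathbb{N}$ with $c$ not a perfect square and $k$ even. Then there exists a normal set $A\subset\mathbb{N}$ such that $xy\neq cn^k$ for all $x,y\in A$ and all $n\in\mathbb{N}$.
   Context: $\mathbb{N}=\{1,2,\dots\}$. A set $A\subset\mathbb{N}$ is normal if its indicator sequence in $\{0,1\}^{\mathbb{N}}$ contains every finite binary word $w$ with asymptotic frequency $2^{-|w|}$. *)

From Stdlib Require Import Reals List Arith.
From Coquelicot Require Import Coquelicot.
Open Scope R_scope.

(* A subset A of N = {1,2,...} is represented by a boolean predicate on nat;
   only its values on positive integers matter. *)

Definition indicator (A : nat -> bool) (i : nat) : bool := A (S i).

Definition occurs_atb (s : nat -> bool) (w : list bool) (i : nat) : bool :=
  forallb (fun j => Bool.eqb (s (i + j)%nat) (nth j w false)) (seq 0 (length w)).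

Definition occ_count (s : nat -> bool) (w : list bool) (N : nat) : nat :=
  length (filter (occurs_atb s w) (seq 0 N)).

Definition normal_set (A : nat -> bool) : Prop :=
  forall w : list bool,
    is_lim_seq (fun N => INR (occ_count (indicator A) w N) / INR N)
               (Rinv (2 ^ length w)).

Definition is_perfect_square (c : nat) : Prop := exists m : nat, (m * m)%nat = c.

From Stdlib Require Import Reals List Arith.
From Coquelicot Require Import Coquelicot.
From Stdlib Require Import Lra Lia Bool ClassicalEpsilon.
Import ListNotations.

(* Call [x] and [y] related when [x y] or [x y c] is a square.  This is an equivalence
   relation, and inside a class with least element [p] every [x] lies on one of two sides,
   according to whether [x p] or [x p c] is a square.  Give each class an independent fair
   bit and put [x] in [A] when the bit equals the side of [x].  If [x y = c n^k] with [k]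
   even then [x y c] is a square, so [x] and [y] are related but, [c] not being a square,
   lie on opposite sides: they are never both in [A].

   For normality, a window of the indicator sequence is uniformly distributed as soon as
   its positions lie in distinct classes.  Classes are sparse ([x] has at most [2 sqrt N]
   relatives below [N], and [x ~ x + d] for at most [d^2 + d c sqrt N] values [x <= N]),
   so the number of occurrences of [w] among the first [K] positions has variance
   [O(K^(3/2))].  Chebyshev along [K = i^4] gives summable failure probabilities [O(1/i^2)];
   a union bound over finitely many requirements at a time and Koenig's lemma yield one
   colouring meeting all of them, and the gaps between fourth powers are negligible. *)

Open Scope nat_scope.

Definition is_square (n : nat) : bool := Nat.sqrt n * Nat.sqrt n =? n.

Lemma is_squareP n : is_square n = true <-> is_perfect_square n.
Proof.
  unfold is_square, is_perfect_square; rewrite Nat.eqb_eq; split.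
  - intros H; exists (Nat.sqrt n); exact H.
  - intros [m <-]; now rewrite Nat.sqrt_square.
Qed.

Lemma is_square_sqr m : is_square (m * m) = true.
Proof. apply is_squareP; now exists m. Qed.

Lemma is_square_mul a b : is_square a = true -> is_square b = true -> is_square (a * b) = true.
Proof. rewrite !is_squareP; intros [x <-] [y <-]; exists (x * y); ring. Qed.

Lemma coprime_parts_of_gcd a b : a <> 0 ->
  exists g u v, g <> 0 /\ a = u * g /\ b = v * g /\ Nat.gcd u v = 1.
Proof.
  intros Ha. set (g := Nat.gcd a b).
  assert (Hg : g <> 0) by (intro E; apply Nat.gcd_eq_0 in E; lia).
  destruct (Nat.gcd_divide_l a b) as [u Hu], (Nat.gcd_divide_r a b) as [v Hv].
  exists g, u, v; repeat split; auto.
  pose proof (Nat.gcd_div_gcd a b g Hg eq_refl) as Hd.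
  fold g in Hu, Hv. rewrite Hu, Hv, !Nat.div_mul in Hd; auto.
Qed.

Lemma divide_of_divide_sqr y s : 0 < y -> Nat.divide (y * y) (s * s) -> Nat.divide y s.
Proof.
  intros Hy [q Hq].
  destruct (coprime_parts_of_gcd y s ltac:(lia)) as (g & u & v & Hg & -> & -> & Huv).
  assert (Hqe : q * (u * u) = v * v) by (apply (Nat.mul_cancel_l _ _ (g * g)); nia).
  assert (Hu : Nat.divide u v).
  { apply (Nat.gauss _ v); [exists (q * u); lia | exact Huv]. }
  assert (u = 1) as ->.
  { apply Nat.divide_1_r. rewrite <- Huv. now apply Nat.gcd_greatest. }
  exists v; lia.
Qed.

Lemma is_square_cancel n y : 0 < y -> is_square (n * (y * y)) = true -> is_square n = true.
Proof.
  intros Hy Hs. apply is_squareP in Hs as [s Hs].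
  destruct (divide_of_divide_sqr y s Hy) as [a ->]; [exists n; lia|].
  apply is_squareP. exists a.
  apply (Nat.mul_cancel_l _ _ (y * y)); nia.
Qed.

(* [least_upto f n] is the least [j <= n] with [f j], or [n] if there is none. *)
Fixpoint least_upto (f : nat -> bool) (n : nat) : nat :=
  match n with
  | 0 => 0
  | S n' => if f (least_upto f n') then least_upto f n' else S n'
  end.

Lemma least_upto_le f n : least_upto f n <= n.
Proof. induction n; simpl; [lia|]. destruct (f (least_upto f n)); lia. Qed.

Lemma least_upto_inv f n :
  (forall j, j < least_upto f n -> f j = false) /\
  (f (least_upto f n) = true \/ least_upto f n = n).
Proof.
  induction n as [|n [IH1 IH2]]; simpl; [split; [lia | auto]|].
  destruct (f (least_upto f n)) eqn:E; [split; auto|].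
  destruct IH2 as [IH2|IH2]; [congruence|].
  split; [|auto]. intros j Hj.
  destruct (Nat.eq_dec j n) as [->|]; [rewrite <- IH2 at 1; exact E | apply IH1; lia].
Qed.

Lemma least_upto_spec f n : f n = true ->
  f (least_upto f n) = true /\ forall j, j < least_upto f n -> f j = false.
Proof.
  intros H. destruct (least_upto_inv f n) as [H1 [H2|H2]]; split; auto. now rewrite H2.
Qed.

Lemma least_unique f a b :
  f a = true -> (forall j, j < a -> f j = false) ->
  f b = true -> (forall j, j < b -> f j = false) -> a = b.
Proof.
  intros Ha Ha' Hb Hb'. destruct (lt_eq_lt_dec a b) as [[H|H]|H]; auto.
  - rewrite Hb' in Ha; [discriminate | exact H].
  - rewrite Ha' in Hb; [discriminate | exact H].
Qed.

Definition sqfree_kernel (z : nat) : nat :=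
  least_upto (fun y => (0 <? y) && is_square (z * y)) z.

Lemma sqfree_kernel_spec z : 0 < z ->
  0 < sqfree_kernel z /\ is_square (z * sqfree_kernel z) = true /\
  forall j, 0 < j < sqfree_kernel z -> is_square (z * j) = false.
Proof.
  intros Hz.
  destruct (least_upto_spec (fun y => (0 <? y) && is_square (z * y)) z) as [H1 H2].
  { apply andb_true_intro; split; [now apply Nat.ltb_lt | apply is_square_sqr]. }
  fold (sqfree_kernel z) in H1, H2.
  apply andb_prop in H1 as [H1 H1']. apply Nat.ltb_lt in H1.
  repeat split; auto. intros j Hj. specialize (H2 j (proj2 Hj)).
  apply andb_false_iff in H2 as [H2|H2]; auto. apply Nat.ltb_nlt in H2; lia.
Qed.

(* [e y] is a square [s^2]; writing [e = u g], [s = v g] with [u], [v] coprime, [u]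
   divides [g] and [z (g / u)] is a square, so minimality of [e] forces [u = 1], i.e. [e | s]. *)
Lemma is_square_mul_kernel z y : 0 < z -> 0 < y -> is_square (z * y) = true ->
  exists a, 0 < a /\ y = sqfree_kernel z * (a * a).
Proof.
  intros Hz Hy Hzy. destruct (sqfree_kernel_spec z Hz) as [He [Hze Hmin]].
  set (e := sqfree_kernel z) in *.
  assert (Hey : is_square (e * y) = true).
  { apply (is_square_cancel _ z); auto.
    replace (e * y * (z * z)) with ((z * e) * (z * y)) by ring. now apply is_square_mul. }
  apply is_squareP in Hey as [s Hs].
  destruct (coprime_parts_of_gcd e s ltac:(lia)) as (g & u & v & Hg & Hu & Hv & Huv).
  assert (Huy : u * y = v * v * g) by (apply (Nat.mul_cancel_l _ _ g); nia).
  assert (Hdiv : Nat.divide u g).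
  { apply (Nat.gauss _ v); [|exact Huv]. apply (Nat.gauss _ v); [|exact Huv].
    exists y; lia. }
  destruct Hdiv as [w Hw].
  assert (Hw0 : 0 < w) by nia.
  assert (Hu1 : u = 1).
  { destruct (Nat.eq_dec u 1) as [|Hne]; auto. exfalso.
    assert (Hzw : is_square (z * w) = true).
    { apply (is_square_cancel _ u); [nia|].
      replace (z * w * (u * u)) with (z * e) by (rewrite Hu, Hw; ring). exact Hze. }
    rewrite Hmin in Hzw; [discriminate|]. split; [exact Hw0 | rewrite Hu, Hw; nia]. }
  subst u. exists v. split; [nia|]. lia.
Qed.

(** * Square classes and the colouring *)

Section SquareClasses.

Variable c : nat.

Definition sq_related (x y : nat) : bool := is_square (x * y) || is_square (x * y * c).

Lemma sq_related_refl x : sq_related x x = true.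
Proof. unfold sq_related. now rewrite is_square_sqr. Qed.

Lemma sq_related_sym x y : sq_related x y = sq_related y x.
Proof. unfold sq_related. now rewrite (Nat.mul_comm x y). Qed.

Lemma sq_related_trans x y z : 0 < c -> 0 < y ->
  sq_related x y = true -> sq_related y z = true -> sq_related x z = true.
Proof.
  intros Hc Hy H1 H2. unfold sq_related in *.
  apply orb_prop in H1 as [H1|H1]; apply orb_prop in H2 as [H2|H2]; apply orb_true_intro.
  - left. apply (is_square_cancel _ y); auto.
    replace (x * z * (y * y)) with ((x * y) * (y * z)) by ring. now apply is_square_mul.
  - right. apply (is_square_cancel _ y); auto.
    replace (x * z * c * (y * y)) with ((x * y) * (y * z * c)) by ring. now apply is_square_mul.
  - right. apply (is_square_cancel _ y); auto.
    replace (x * z * c * (y * y)) with ((x * y * c) * (y * z)) by ring. now apply is_square_mul.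
  - left. apply (is_square_cancel _ (y * c)); [nia|].
    replace (x * z * (y * c * (y * c))) with ((x * y * c) * (y * z * c)) by ring.
    now apply is_square_mul.
Qed.

Definition class_rep (x : nat) : nat :=
  least_upto (fun y => (0 <? y) && sq_related x y) x.

Lemma class_rep_spec x : 0 < x ->
  0 < class_rep x /\ class_rep x <= x /\ sq_related x (class_rep x) = true /\
  forall j, 0 < j < class_rep x -> sq_related x j = false.
Proof.
  intros Hx.
  destruct (least_upto_spec (fun y => (0 <? y) && sq_related x y) x) as [H1 H2].
  { rewrite sq_related_refl. apply Nat.ltb_lt in Hx. now rewrite Hx. }
  fold (class_rep x) in H1, H2. apply andb_prop in H1 as [H1 H1'].
  apply Nat.ltb_lt in H1. repeat split; auto.
  - apply least_upto_le.
  - intros j Hj. specialize (H2 j (proj2 Hj)).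
    replace (0 <? j) with true in H2 by (symmetry; apply Nat.ltb_lt; lia). exact H2.
Qed.

Lemma class_rep_eq x y : 0 < c -> 0 < x -> 0 < y -> sq_related x y = true -> class_rep x = class_rep y.
Proof.
  intros Hc Hx Hy Hr.
  assert (Hsame : forall j, 0 < j -> sq_related x j = sq_related y j).
  { intros j Hj. destruct (sq_related x j) eqn:E1, (sq_related y j) eqn:E2; auto.
    - rewrite sq_related_sym in Hr. now rewrite (sq_related_trans y x j Hc Hx Hr E1) in E2.
    - now rewrite (sq_related_trans x y j Hc Hy Hr E2) in E1. }
  set (f := fun j => (0 <? j) && sq_related x j).
  assert (Hf : forall j, f j = (0 <? j) && sq_related y j).
  { intros [|j]; [reflexivity|]. unfold f. rewrite Hsame; [reflexivity | lia]. }
  destruct (least_upto_spec f x) as [A1 A2].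
  { unfold f. rewrite sq_related_refl. apply Nat.ltb_lt in Hx. now rewrite Hx. }
  destruct (least_upto_spec (fun j => (0 <? j) && sq_related y j) y) as [B1 B2].
  { rewrite sq_related_refl. apply Nat.ltb_lt in Hy. now rewrite Hy. }
  apply (least_unique f); auto; intros; rewrite Hf; auto.
Qed.

Lemma sq_related_of_class_rep_eq x y : 0 < c -> 0 < x -> 0 < y ->
  class_rep x = class_rep y -> sq_related x y = true.
Proof.
  intros Hc Hx Hy He.
  destruct (class_rep_spec x Hx) as (P0 & _ & P1 & _), (class_rep_spec y Hy) as (_ & _ & Q1 & _).
  rewrite sq_related_sym in Q1. rewrite He in P0, P1. eapply sq_related_trans; eauto.
Qed.

(* Inside a class every [x] has [x p] or [x p c] square ([p] its representative);
   [side x] records which, and the colour of the whole class is one random bit. *)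
Definition side (x : nat) : bool := is_square (x * class_rep x).

Definition colouring (om : nat -> bool) (x : nat) : bool := Bool.eqb (om (class_rep x)) (side x).

(* If [x y c] is a square then [x ~ y], and [x y] is not a square because [c] is not,
   so [x] and [y] lie on different sides of their common class. *)
Lemma colouring_no_square_product om x y : 0 < c -> ~ is_perfect_square c -> 0 < x -> 0 < y ->
  is_square (x * y * c) = true -> colouring om x = true -> colouring om y = true -> False.
Proof.
  intros Hc Hsq Hx Hy Hxyc Cx Cy.
  assert (Hp : class_rep x = class_rep y).
  { apply class_rep_eq; auto. unfold sq_related. now rewrite Hxyc, orb_true_r. }
  assert (Hnxy : is_square (x * y) = false).
  { destruct (is_square (x * y)) eqn:E; auto. exfalso. apply is_squareP in E as [a Ha].
    apply Hsq, is_squareP, (is_square_cancel _ a); [nia|].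
    rewrite Ha, Nat.mul_comm. exact Hxyc. }
  unfold colouring in Cx, Cy. rewrite Hp in Cx. apply Bool.eqb_prop in Cx, Cy.
  rewrite Cx in Cy. unfold side in Cy. rewrite <- Hp in Cy.
  destruct (class_rep_spec x Hx) as (P0 & _ & P1 & _), (class_rep_spec y Hy) as (_ & _ & Q1 & _).
  rewrite <- Hp in Q1. set (p := class_rep x) in *.
  unfold sq_related in P1, Q1.
  enough (is_square (x * y) = true) by congruence.
  destruct (is_square (x * p)) eqn:E1; rewrite <- Cy in Q1.
  - apply (is_square_cancel _ p); auto.
    replace (x * y * (p * p)) with ((x * p) * (y * p)) by ring. now apply is_square_mul.
  - apply (is_square_cancel _ (p * c)); [nia|]. simpl in P1, Q1.
    replace (x * y * (p * c * (p * c))) with ((x * p * c) * (y * p * c)) by ring.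
    now apply is_square_mul.
Qed.

End SquareClasses.

Definition count_sat (f : nat -> bool) (l : list nat) : nat := length (filter f l).

Lemma count_sat_orb f g l : count_sat (fun y => f y || g y) l <= count_sat f l + count_sat g l.
Proof. unfold count_sat; induction l as [|a l IH]; simpl; auto. destruct (f a), (g a); simpl; lia. Qed.

Lemma count_sat_app f l1 l2 : count_sat f (l1 ++ l2) = count_sat f l1 + count_sat f l2.
Proof. unfold count_sat. now rewrite filter_app, length_app. Qed.

Lemma count_sat_subrange f b K N : 1 <= b -> b + K <= N + 1 ->
  count_sat f (seq b K) <= count_sat f (seq 1 N).
Proof.
  intros H1 H2. replace N with ((b - 1) + (K + (N + 1 - b - K))) by lia.
  rewrite !seq_app, !count_sat_app. replace (1 + (b - 1)) with b by lia. lia.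
Qed.

Lemma count_sat_le_incl f l L : NoDup l ->
  (forall x, In x l -> f x = true -> In x L) -> count_sat f l <= length L.
Proof.
  intros Hl H. apply NoDup_incl_length; [now apply NoDup_filter|].
  intros x Hx. apply filter_In in Hx as [Hx1 Hx2]. auto.
Qed.

Lemma count_is_square_mul z N : 0 < z ->
  count_sat (fun y => is_square (z * y)) (seq 1 N) <= Nat.sqrt N.
Proof.
  intros Hz.
  rewrite <- (length_seq (Nat.sqrt N) 1),
    <- (length_map (fun a => sqfree_kernel z * (a * a)) (seq 1 (Nat.sqrt N))).
  apply count_sat_le_incl; [apply seq_NoDup|]. intros y Hy1 Hy2. apply in_seq in Hy1.
  destruct (is_square_mul_kernel z y Hz ltac:(lia) Hy2) as [a [Ha ->]].
  apply in_map_iff. exists a. split; auto. apply in_seq.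
  destruct (sqfree_kernel_spec z Hz) as [He _].
  assert (a * a <= N) by nia. apply Nat.sqrt_le_square in H. lia.
Qed.

Lemma count_sq_related c x N : 0 < c -> 0 < x ->
  count_sat (sq_related c x) (seq 1 N) <= 2 * Nat.sqrt N.
Proof.
  intros Hc Hx. unfold sq_related. eapply Nat.le_trans; [apply count_sat_orb|].
  pose proof (count_is_square_mul x N Hx).
  pose proof (count_is_square_mul (x * c) N ltac:(nia)).
  unfold count_sat in *.
  rewrite (filter_ext (fun y => is_square (x * y * c)) (fun y => is_square (x * c * y)))
    by (intros; f_equal; ring). lia.
Qed.

(* From [x < s < x + d] and [s^2 = x (x + d)]: writing [s = x + r], [x d = 2 x r + r^2]. *)
Lemma lt_sqr_of_square_shift x d s : 0 < x -> 0 < d -> s * s = x * (x + d) -> x < d * d.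
Proof.
  intros Hx Hd Hs. assert (x < s) by nia. assert (s < x + d) by nia.
  destruct (Nat.le_exists_sub x s) as [r [-> _]]; [lia|].
  assert (x * d = 2 * x * r + r * r) by nia. assert (2 * r < d) by nia. nia.
Qed.

Lemma count_square_shift d N : 0 < d ->
  count_sat (fun x => is_square (x * (x + d))) (seq 1 N) <= d * d.
Proof.
  intros Hd. rewrite <- (length_seq (d * d) 1).
  apply count_sat_le_incl; [apply seq_NoDup|]. intros x Hx1 Hx2. apply in_seq in Hx1.
  apply is_squareP in Hx2 as [s Hs]. apply in_seq.
  pose proof (lt_sqr_of_square_shift x d s ltac:(lia) Hd Hs). lia.
Qed.

(* With [g = gcd(x, x + d)] and [x = x1 g], the condition forces [x1 = e a^2] with [e]
   the squarefree kernel of [x1], [e | c] and [g | d]. *)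
Lemma count_square_shift_mul c d N : 0 < c -> 0 < d ->
  count_sat (fun x => is_square (x * (x + d) * c)) (seq 1 N) <= d * c * Nat.sqrt N.
Proof.
  intros Hc Hd.
  set (L := flat_map (fun g => flat_map (fun e =>
              map (fun a => g * e * (a * a)) (seq 1 (Nat.sqrt N))) (seq 1 c)) (seq 1 d)).
  assert (HL : length L = d * c * Nat.sqrt N).
  { unfold L. rewrite (flat_map_constant_length (c := c * Nat.sqrt N)); [rewrite length_seq; lia|].
    intros g _. rewrite (flat_map_constant_length (c := Nat.sqrt N)); [rewrite length_seq; lia|].
    intros e _. now rewrite length_map, length_seq. }
  rewrite <- HL. apply count_sat_le_incl; [apply seq_NoDup|]. intros x Hx Hsq. apply in_seq in Hx.
  destruct (coprime_parts_of_gcd x (x + d) ltac:(lia)) as (g & x1 & x2 & Hg & Hx1 & Hx2 & Hco).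
  assert (Hgd : g <= d).
  { apply Nat.divide_pos_le; [exact Hd|]. replace d with (x + d - x) by lia.
    apply Nat.divide_sub_r; [exists x2 | exists x1]; assumption. }
  assert (Hx10 : 0 < x1) by nia.
  assert (Hsq1 : is_square (x1 * (x2 * c)) = true).
  { apply (is_square_cancel _ g); [lia|].
    replace (x1 * (x2 * c) * (g * g)) with (x * (x + d) * c) by (rewrite Hx1 at 1; rewrite Hx2; ring).
    exact Hsq. }
  destruct (is_square_mul_kernel x1 x1 Hx10 Hx10 (is_square_sqr x1)) as [a [Ha Hxa]].
  destruct (is_square_mul_kernel x1 (x2 * c) Hx10 ltac:(nia) Hsq1) as [b [Hb Hxb]].
  set (e := sqfree_kernel x1) in *.
  destruct (sqfree_kernel_spec x1 Hx10) as [He _]. fold e in He.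
  assert (Hec : e <= c).
  { apply Nat.divide_pos_le; [exact Hc|]. apply (Nat.gauss _ x2); [exists (b * b); rewrite Hxb; ring|].
    apply Nat.divide_1_r. rewrite <- Hco. apply Nat.gcd_greatest; [|apply Nat.gcd_divide_r].
    apply Nat.divide_trans with e; [apply Nat.gcd_divide_l | exists (a * a); rewrite Hxa; ring]. }
  unfold L. apply in_flat_map. exists g. split; [apply in_seq; lia|].
  apply in_flat_map. exists e. split; [apply in_seq; lia|].
  apply in_map_iff. exists a. split; [rewrite Hx1, Hxa; ring|].
  apply in_seq. assert (a * a <= N) by nia. apply Nat.sqrt_le_square in H. lia.
Qed.

Lemma count_sq_related_shift c d N : 0 < c -> 0 < d ->
  count_sat (fun x => sq_related c x (x + d)) (seq 1 N) <= d * d + d * c * Nat.sqrt N.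
Proof.
  intros Hc Hd. unfold sq_related. eapply Nat.le_trans; [apply count_sat_orb|].
  pose proof (count_square_shift d N Hd). pose proof (count_square_shift_mul c d N Hc Hd). lia.
Qed.

(** * Finite sums and uniform expectation *)

Open Scope R_scope.

Fixpoint sum_upto (f : nat -> R) (n : nat) : R :=
  match n with O => 0 | S n' => sum_upto f n' + f n' end.

Lemma sum_upto_ext f g n : (forall k, (k < n)%nat -> f k = g k) -> sum_upto f n = sum_upto g n.
Proof. induction n; intros H; simpl; auto. rewrite IHn, H; auto. Qed.

Lemma sum_upto_plus f g n : sum_upto (fun k => f k + g k) n = sum_upto f n + sum_upto g n.
Proof. induction n; simpl; [lra|]. rewrite IHn; lra. Qed.

Lemma sum_upto_scal a f n : sum_upto (fun k => a * f k) n = a * sum_upto f n.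
Proof. induction n; simpl; [lra|]. rewrite IHn; lra. Qed.

Lemma sum_upto_const a n : sum_upto (fun _ => a) n = INR n * a.
Proof. induction n; simpl sum_upto; [simpl; lra|]. rewrite IHn, S_INR; lra. Qed.

Lemma sum_upto_minus_const f a n : sum_upto (fun k => f k - a) n = sum_upto f n - INR n * a.
Proof.
  rewrite (sum_upto_ext _ (fun k => f k + (fun _ => - a) k)) by (intros; simpl; lra).
  rewrite sum_upto_plus, sum_upto_const. lra.
Qed.

Lemma sum_upto_le f g n : (forall k, (k < n)%nat -> f k <= g k) -> sum_upto f n <= sum_upto g n.
Proof.
  induction n; intros H; simpl; [lra|].
  pose proof (H n ltac:(lia)). pose proof (IHn ltac:(auto)). lra.
Qed.

Lemma sum_upto_nonneg f n : (forall k, (k < n)%nat -> 0 <= f k) -> 0 <= sum_upto f n.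
Proof.
  intros H. replace 0 with (sum_upto (fun _ => 0) n) by (rewrite sum_upto_const; lra).
  now apply sum_upto_le.
Qed.

Lemma le_sum_upto f n k : (forall k, (k < n)%nat -> 0 <= f k) -> (k < n)%nat -> f k <= sum_upto f n.
Proof.
  induction n; intros H Hk; [lia|]. simpl.
  destruct (Nat.eq_dec k n) as [->|].
  - pose proof (sum_upto_nonneg f n ltac:(auto)). lra.
  - pose proof (IHn ltac:(auto) ltac:(lia)). pose proof (H n ltac:(lia)). lra.
Qed.

Lemma le_sum_upto2 (F : nat -> nat -> R) a b i j : (forall i j, 0 <= F i j) ->
  (i < a)%nat -> (j < b)%nat -> F i j <= sum_upto (fun i => sum_upto (fun j => F i j) b) a.
Proof.
  intros H Hi Hj. eapply Rle_trans; [apply (le_sum_upto (fun j => F i j) b j); auto|].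
  apply (le_sum_upto (fun i => sum_upto (fun j => F i j) b)); auto.
  intros; apply sum_upto_nonneg; auto.
Qed.

Lemma sum_upto_mult f g n m :
  sum_upto f n * sum_upto g m = sum_upto (fun i => sum_upto (fun j => f i * g j) m) n.
Proof. induction n; simpl; [lra|]. rewrite <- IHn, sum_upto_scal. lra. Qed.

Lemma sum_upto_swap (F : nat -> nat -> R) na nb :
  sum_upto (fun a => sum_upto (fun b => F a b) nb) na =
  sum_upto (fun b => sum_upto (fun a => F a b) na) nb.
Proof.
  induction na; simpl; [rewrite sum_upto_const; lra|]. now rewrite IHna, <- sum_upto_plus.
Qed.

Lemma pow_half_bounds l : 0 < (/ 2) ^ l <= 1.
Proof. split; [apply pow_lt; lra | induction l; simpl; lra]. Qed.

Definition b2R (b : bool) : R := if b then 1 else 0.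

Lemma b2R_bounds b : 0 <= b2R b <= 1.
Proof. destruct b; simpl; lra. Qed.

Lemma b2R_andb a b : b2R (a && b) = b2R a * b2R b.
Proof. destruct a, b; simpl; lra. Qed.

Lemma sum_upto_b2R (P : nat -> bool) b K :
  sum_upto (fun k => b2R (P (b + k)%nat)) K = INR (count_sat P (seq b K)).
Proof.
  induction K; cbn [sum_upto]; auto. rewrite IHK. unfold count_sat.
  rewrite seq_S, filter_app, length_app, plus_INR. simpl. destruct (P (b + K)%nat); simpl; lra.
Qed.

Definition iverson (P : Prop) : R := if excluded_middle_informative P then 1 else 0.

Lemma iverson_bounds P : 0 <= iverson P <= 1.
Proof. unfold iverson; destruct (excluded_middle_informative P); lra. Qed.

Lemma iverson_true (P : Prop) : P -> iverson P = 1.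
Proof. unfold iverson; destruct (excluded_middle_informative P); tauto. Qed.

Lemma iverson_false (P : Prop) : ~ P -> iverson P = 0.
Proof. unfold iverson; destruct (excluded_middle_informative P); tauto. Qed.

Definition upd (om : nat -> bool) (k : nat) (b : bool) : nat -> bool :=
  fun j => if Nat.eqb j k then b else om j.

(* The mean of [f] over the [2^M] assignments of the bits [0, ..., M-1], the other bits
   being [false]. *)
Fixpoint expect (M : nat) (f : (nat -> bool) -> R) : R :=
  match M with
  | O => f (fun _ => false)
  | S M' => (expect M' (fun om => f (upd om M' false)) + expect M' (fun om => f (upd om M' true))) / 2
  end.

Lemma expect_ext M f g : (forall om, f om = g om) -> expect M f = expect M g.
Proof.
  revert f g; induction M; intros f g H; simpl; auto.
  now rewrite (IHM _ (fun om => g (upd om M false)) (fun om => H _)),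
    (IHM _ (fun om => g (upd om M true)) (fun om => H _)).
Qed.

Lemma expect_plus M f g : expect M (fun om => f om + g om) = expect M f + expect M g.
Proof. revert f g; induction M; intros f g; simpl; auto. rewrite !IHM. lra. Qed.

Lemma expect_scal M a f : expect M (fun om => a * f om) = a * expect M f.
Proof. revert f; induction M; intros f; simpl; auto. rewrite !IHM. lra. Qed.

Lemma expect_const M a : expect M (fun _ => a) = a.
Proof. induction M; simpl; auto. rewrite IHM. lra. Qed.

Lemma expect_le M f g : (forall om, f om <= g om) -> expect M f <= expect M g.
Proof.
  revert f g; induction M; intros f g H; simpl; auto.
  pose proof (IHM (fun om => f (upd om M false)) (fun om => g (upd om M false)) (fun om => H _)).
  pose proof (IHM (fun om => f (upd om M true)) (fun om => g (upd om M true)) (fun om => H _)). lra.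
Qed.

Lemma expect_sum_upto M (F : nat -> (nat -> bool) -> R) n :
  expect M (fun om => sum_upto (fun k => F k om) n) = sum_upto (fun k => expect M (F k)) n.
Proof. induction n; simpl; [apply expect_const|]. now rewrite expect_plus, IHn. Qed.

Lemma exists_of_expect_lt M (P : (nat -> bool) -> Prop) (g : (nat -> bool) -> R) :
  (forall om, ~ P om -> 1 <= g om) -> expect M g < 1 -> exists om, P om.
Proof.
  intros H1 H2. apply Classical_Prop.NNPP. intros Hn.
  assert (expect M (fun _ => 1) <= expect M g).
  { apply expect_le. intros om. apply H1. intros Hp. apply Hn. eauto. }
  rewrite expect_const in H. lra.
Qed.

Definition agree (L : list (nat * bool)) (om : nat -> bool) : bool :=
  forallb (fun p => Bool.eqb (om (fst p)) (snd p)) L.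

Lemma agree_app L1 L2 om : agree (L1 ++ L2) om = agree L1 om && agree L2 om.
Proof. apply forallb_app. Qed.

Lemma agree_upd_fresh L om k b : ~ In k (map fst L) -> agree L (upd om k b) = agree L om.
Proof.
  induction L as [|[i v] L IH]; simpl; auto. intros H.
  unfold upd at 1. destruct (Nat.eqb_spec i k); [exfalso; auto|]. rewrite IH; auto.
Qed.

Lemma agree_upd_cons L om k b v : ~ In k (map fst L) ->
  agree ((k, v) :: L) (upd om k b) = Bool.eqb b v && agree L om.
Proof. intros H. simpl. unfold upd at 1. now rewrite Nat.eqb_refl, agree_upd_fresh. Qed.

Lemma expect_agree M L : NoDup (map fst L) -> List.Forall (fun p => (fst p < M)%nat) L ->
  expect M (fun om => b2R (agree L om)) = (/ 2) ^ length L.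
Proof.
  revert L; induction M; intros L Hnd Hlt.
  { destruct L as [|p L]; simpl; [auto|]. inversion Hlt; lia. }
  assert (Hlt' : forall L', incl L' L -> ~ In M (map fst L') ->
                            List.Forall (fun p => (fst p < M)%nat) L').
  { intros L' Hinc Hn. apply Forall_forall. intros p Hp. rewrite Forall_forall in Hlt.
    specialize (Hlt p (Hinc p Hp)). assert (fst p <> M) by (intros E; apply Hn, in_map_iff; eauto).
    simpl in Hlt. lia. }
  simpl expect. destruct (in_dec Nat.eq_dec M (map fst L)) as [Hin|Hnin].
  - apply in_map_iff in Hin as [[i v] [Hi Hin]]. simpl in Hi; subst i.
    apply in_split in Hin as [L1 [L2 ->]].
    rewrite map_app in Hnd. simpl in Hnd.
    assert (Hnd' : NoDup (map fst (L1 ++ L2))) by (rewrite map_app; eapply NoDup_remove_1; eauto).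
    assert (Hni : ~ In M (map fst (L1 ++ L2))) by (rewrite map_app; eapply NoDup_remove_2; eauto).
    assert (Hmove : forall om, agree (L1 ++ (M, v) :: L2) om = agree ((M, v) :: L1 ++ L2) om).
    { intros om. simpl. rewrite !agree_app. simpl. now destruct (agree L1 om), (Bool.eqb _ _). }
    assert (Hb : forall b, expect M (fun om => b2R (agree (L1 ++ (M, v) :: L2) (upd om M b))) =
                           b2R (Bool.eqb b v) * (/ 2) ^ length (L1 ++ L2)).
    { intros b. rewrite (expect_ext M _ (fun om => b2R (Bool.eqb b v) * b2R (agree (L1 ++ L2) om)))
        by (intros om; now rewrite Hmove, agree_upd_cons, b2R_andb).
      rewrite expect_scal, IHM; auto.
      apply Hlt'; auto. intros p Hp. apply in_app_or in Hp. apply in_or_app. simpl. tauto. }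
    rewrite !Hb, !length_app. simpl. rewrite Nat.add_succ_r. simpl. destruct v; simpl; lra.
  - rewrite !(expect_ext M (fun om => b2R (agree L (upd om M _))) (fun om => b2R (agree L om)))
      by (intros om; now rewrite agree_upd_fresh).
    rewrite IHM; auto; [lra|]. apply Hlt'; auto. apply incl_refl.
Qed.

(** * Windows of the colouring *)

Lemma NoDup_map_seq (f : nat -> nat) a l :
  (forall i j, (i < j < l)%nat -> f (a + i)%nat <> f (a + j)%nat) -> NoDup (map f (seq a l)).
Proof.
  revert a; induction l; intros a H; simpl; constructor.
  - intros Hin. apply in_map_iff in Hin as [x [Hx Hin]]. apply in_seq in Hin.
    apply (H 0%nat (x - a)%nat); [lia|].
    now replace (a + 0)%nat with a by lia; replace (a + (x - a))%nat with x by lia.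
  - apply IHl. intros i j Hij. replace (S a + i)%nat with (a + S i)%nat by lia.
    replace (S a + j)%nat with (a + S j)%nat by lia. apply H. lia.
Qed.

Section Windows.

Variable c : nat.
Hypothesis c_pos : (0 < c)%nat.

(* The window of length [|w|] starting at position [n] of the indicator sequence (that is,
   at the integer [n + 1]) reads [w] iff the class bits take these values. *)
Definition window_bits (w : list bool) (n : nat) : list (nat * bool) :=
  map (fun j => (class_rep c (S (n + j)), Bool.eqb (side c (S (n + j))) (nth j w false)))
      (seq 0 (length w)).

Lemma occurs_atb_colouring w om n :
  occurs_atb (indicator (colouring c om)) w n = agree (window_bits w n) om.
Proof.
  unfold occurs_atb, agree, window_bits. induction (seq 0 (length w)) as [|j l IH]; simpl; auto.
  rewrite IH. unfold indicator, colouring.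
  now destruct (om (class_rep c (S (n + j)))), (side c (S (n + j))), (nth j w false).
Qed.

Lemma window_bits_length w n : length (window_bits w n) = length w.
Proof. unfold window_bits. now rewrite length_map, length_seq. Qed.

Lemma window_bits_fst w n :
  map fst (window_bits w n) = map (fun j => class_rep c (S (n + j))) (seq 0 (length w)).
Proof. unfold window_bits. now rewrite map_map. Qed.

Lemma window_bits_lt w n M : (n + length w < M)%nat ->
  List.Forall (fun p => (fst p < M)%nat) (window_bits w n).
Proof.
  intros H. apply Forall_forall. intros p Hp. unfold window_bits in Hp.
  apply in_map_iff in Hp as [j [<- Hj]]. apply in_seq in Hj. simpl.
  destruct (class_rep_spec c (S (n + j)) ltac:(lia)) as (_ & Hle & _). lia.
Qed.

Definition distinct_window (w : list bool) (n : nat) : Prop := NoDup (map fst (window_bits w n)).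

Definition related_in_windows (w : list bool) (n m : nat) : R :=
  sum_upto (fun i => sum_upto (fun j =>
    b2R (sq_related c (S (n + i)) (S (m + j)))) (length w)) (length w).

Lemma related_in_windows_nonneg w n m : 0 <= related_in_windows w n m.
Proof. apply sum_upto_nonneg; intros; apply sum_upto_nonneg; intros; apply b2R_bounds. Qed.

Lemma related_in_windows_ge1 w n m i j : (i < length w)%nat -> (j < length w)%nat ->
  class_rep c (S (n + i)) = class_rep c (S (m + j)) -> 1 <= related_in_windows w n m.
Proof.
  intros Hi Hj He. unfold related_in_windows.
  eapply Rle_trans;
    [|apply (le_sum_upto2 (fun i j => b2R (sq_related c (S (n + i)) (S (m + j)))) _ _ i j);
      auto; intros; apply b2R_bounds].
  rewrite sq_related_of_class_rep_eq; [simpl; lra | exact c_pos | lia | lia | exact He].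
Qed.

Lemma iverson_not_distinct_window w n :
  iverson (~ distinct_window w n) <=
  sum_upto (fun i => sum_upto (fun j =>
    if Nat.ltb i j then b2R (sq_related c (S (n + i)) (S (n + i) + (j - i))) else 0)
    (length w)) (length w).
Proof.
  set (l := length w).
  assert (Hnn : forall i j,
    0 <= if Nat.ltb i j then b2R (sq_related c (S (n + i)) (S (n + i) + (j - i))) else 0)
    by (intros i j; destruct (Nat.ltb i j); [apply b2R_bounds | lra]).
  destruct (Classical_Prop.classic (distinct_window w n)) as [G|G].
  - rewrite iverson_false by tauto. apply sum_upto_nonneg; intros; apply sum_upto_nonneg; auto.
  - rewrite iverson_true by auto.
    assert (exists i j, (i < j < l)%nat /\ class_rep c (S (n + i)) = class_rep c (S (n + j)))
      as (i & j & Hij & He).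
    { apply Classical_Prop.NNPP. intros Hn. apply G. unfold distinct_window. rewrite window_bits_fst.
      apply (NoDup_map_seq (fun j => class_rep c (S (n + j))) 0 l). intros i j Hij E. eauto. }
    eapply Rle_trans; [|apply (le_sum_upto2 _ l l i j); auto; lia]. cbv beta.
    replace (Nat.ltb i j) with true by (symmetry; apply Nat.ltb_lt; lia).
    replace (S (n + i) + (j - i))%nat with (S (n + j)) by lia.
    rewrite sq_related_of_class_rep_eq; [simpl; lra | exact c_pos | lia | lia | exact He].
Qed.

Lemma iverson_not_distinct_pair w n m :
  iverson (~ NoDup (map fst (window_bits w n ++ window_bits w m))) <=
  iverson (~ distinct_window w n) + iverson (~ distinct_window w m) + related_in_windows w n m.
Proof.
  pose proof (related_in_windows_nonneg w n m).
  pose proof (iverson_bounds (~ distinct_window w n)).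
  pose proof (iverson_bounds (~ distinct_window w m)).
  destruct (Classical_Prop.classic (NoDup (map fst (window_bits w n ++ window_bits w m)))) as [G|G].
  { rewrite iverson_false by tauto. lra. }
  rewrite iverson_true by auto.
  destruct (Classical_Prop.classic (distinct_window w n)) as [Gn|Gn];
    [|rewrite (iverson_true (~ distinct_window w n)); auto; lra].
  destruct (Classical_Prop.classic (distinct_window w m)) as [Gm|Gm];
    [|rewrite (iverson_true (~ distinct_window w m)); auto; lra].
  assert (exists a, In a (map fst (window_bits w n)) /\ In a (map fst (window_bits w m)))
    as [a [Ha1 Ha2]].
  { apply Classical_Prop.NNPP. intros Hn. apply G. rewrite map_app. apply NoDup_app; auto.
    intros a Ha Hb. eauto. }
  rewrite window_bits_fst in Ha1, Ha2.
  apply in_map_iff in Ha1 as [i [Hi Hi']], Ha2 as [j [Hj Hj']]. apply in_seq in Hi', Hj'.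
  assert (1 <= related_in_windows w n m); [|lra].
  apply (related_in_windows_ge1 w n m i j); [lia | lia | congruence].
Qed.

Definition window_match (w : list bool) (n : nat) (om : nat -> bool) : R :=
  b2R (agree (window_bits w n) om).

Lemma expect_window_cov_disjoint w n m M :
  NoDup (map fst (window_bits w n ++ window_bits w m)) ->
  (n + length w < M)%nat -> (m + length w < M)%nat ->
  expect M (fun om => (window_match w n om - (/ 2) ^ length w) *
                      (window_match w m om - (/ 2) ^ length w)) = 0.
Proof.
  intros Hnd Hn Hm. set (mu := (/ 2) ^ length w). unfold window_match.
  rewrite (expect_ext M _ (fun om => b2R (agree (window_bits w n ++ window_bits w m) om) +
     ((- mu) * b2R (agree (window_bits w n) om) +
      ((- mu) * b2R (agree (window_bits w m) om) + (fun _ => mu * mu) om))))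
    by (intros om; rewrite agree_app, b2R_andb; lra).
  rewrite !expect_plus, !expect_scal, expect_const. rewrite map_app in Hnd.
  rewrite !expect_agree.
  - rewrite length_app, !window_bits_length, pow_add. fold mu. lra.
  - eapply NoDup_app_remove_l; eauto.
  - now apply window_bits_lt.
  - eapply NoDup_app_remove_r; eauto.
  - now apply window_bits_lt.
  - now rewrite map_app.
  - apply List.Forall_app; split; now apply window_bits_lt.
Qed.

Lemma expect_window_cov_le w n m M : (n + length w < M)%nat -> (m + length w < M)%nat ->
  expect M (fun om => (window_match w n om - (/ 2) ^ length w) *
                      (window_match w m om - (/ 2) ^ length w))
  <= iverson (~ NoDup (map fst (window_bits w n ++ window_bits w m))).
Proof.
  intros Hn Hm.
  destruct (Classical_Prop.classic (NoDup (map fst (window_bits w n ++ window_bits w m)))) as [G|G].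
  - rewrite expect_window_cov_disjoint; auto. apply iverson_bounds.
  - rewrite iverson_true by auto. rewrite <- (expect_const M 1). apply expect_le. intros om.
    pose proof (pow_half_bounds (length w)).
    pose proof (b2R_bounds (agree (window_bits w n) om)).
    pose proof (b2R_bounds (agree (window_bits w m) om)).
    unfold window_match. set (mu := (/ 2) ^ _) in *. nra.
Qed.

Lemma sum_not_distinct_window w K :
  sum_upto (fun n => iverson (~ distinct_window w n)) K <=
  INR (length w) * (INR (length w) *
    INR (length w * length w + length w * c * Nat.sqrt (K + length w))).
Proof.
  set (l := length w). set (B := (l * l + l * c * Nat.sqrt (K + l))%nat).
  eapply Rle_trans; [apply sum_upto_le; intros n _; apply iverson_not_distinct_window|].
  fold l. rewrite sum_upto_swap, <- (sum_upto_const (INR l * INR B) l).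
  apply sum_upto_le. intros i Hi.
  rewrite sum_upto_swap, <- sum_upto_const. apply sum_upto_le. intros j Hj.
  destruct (Nat.ltb_spec i j).
  2:{ rewrite sum_upto_const, Rmult_0_r. apply pos_INR. }
  set (d := (j - i)%nat).
  rewrite (sum_upto_ext _ (fun n => b2R (sq_related c (S i + n) (S i + n + d))))
    by (intros k _; f_equal; f_equal; lia).
  rewrite (sum_upto_b2R (fun x => sq_related c x (x + d)) (S i)). apply le_INR.
  eapply Nat.le_trans; [apply (count_sat_subrange _ _ _ (K + l)); lia|].
  eapply Nat.le_trans; [apply count_sq_related_shift; unfold d; lia|].
  unfold B. assert (d <= l)%nat by (unfold d; lia). clearbody d.
  apply Nat.add_le_mono; [apply Nat.mul_le_mono; lia | apply Nat.mul_le_mono_r, Nat.mul_le_mono_r; lia].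
Qed.

Lemma sum_related_in_windows w K :
  sum_upto (fun n => sum_upto (fun m => related_in_windows w n m) K) K
  <= INR K * (INR (length w) * (INR (length w) * INR (2 * Nat.sqrt (K + length w)))).
Proof.
  set (l := length w). unfold related_in_windows. fold l.
  rewrite <- sum_upto_const. apply sum_upto_le. intros n Hn.
  rewrite sum_upto_swap, <- sum_upto_const. apply sum_upto_le. intros i Hi.
  rewrite sum_upto_swap, <- sum_upto_const. apply sum_upto_le. intros j Hj.
  rewrite (sum_upto_ext _ (fun m => b2R (sq_related c (S (n + i)) (S j + m)%nat)))
    by (intros k _; f_equal; f_equal; lia).
  rewrite (sum_upto_b2R (sq_related c (S (n + i))) (S j)). apply le_INR.
  eapply Nat.le_trans; [apply (count_sat_subrange _ _ _ (K + l)); lia|].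
  apply count_sq_related; lia.
Qed.

Definition window_count (w : list bool) (K : nat) (om : nat -> bool) : R :=
  sum_upto (fun n => window_match w n om) K.

Lemma occ_count_colouring w K om :
  INR (occ_count (indicator (colouring c om)) w K) = window_count w K om.
Proof.
  unfold occ_count, window_count, window_match.
  rewrite (sum_upto_ext _ (fun n => b2R (occurs_atb (indicator (colouring c om)) w (0 + n)%nat)))
    by (intros; now rewrite occurs_atb_colouring).
  now rewrite sum_upto_b2R.
Qed.

Definition variance_bound (l s : nat) : nat := 2 * (l * l * (l * l + l * c * s)) + l * l * (2 * s).

Lemma variance_window_count w K M : (K + length w < M)%nat ->
  expect M (fun om => (window_count w K om - INR K * (/ 2) ^ length w) ^ 2)
  <= INR K * INR (variance_bound (length w) (Nat.sqrt (K + length w))).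
Proof.
  intros HM. set (l := length w). set (mu := (/ 2) ^ l).
  rewrite (expect_ext M _ (fun om => sum_upto (fun n => sum_upto (fun m =>
     (window_match w n om - mu) * (window_match w m om - mu)) K) K)).
  2:{ intros om. unfold window_count. rewrite <- sum_upto_minus_const, <- Rsqr_pow2.
      apply sum_upto_mult. }
  rewrite expect_sum_upto.
  rewrite (sum_upto_ext _ (fun n => sum_upto (fun m => expect M (fun om =>
     (window_match w n om - mu) * (window_match w m om - mu))) K))
    by (intros; apply expect_sum_upto).
  eapply Rle_trans.
  { apply sum_upto_le. intros n Hn. apply sum_upto_le. intros m Hm.
    eapply Rle_trans; [apply expect_window_cov_le; unfold l in *; lia|].
    apply iverson_not_distinct_pair. }
  rewrite (sum_upto_ext _ (fun n => INR K * iverson (~ distinct_window w n) +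
     (sum_upto (fun m => iverson (~ distinct_window w m)) K +
      sum_upto (fun m => related_in_windows w n m) K))).
  2:{ intros n _. rewrite <- sum_upto_const, <- !sum_upto_plus. apply sum_upto_ext. intros; lra. }
  rewrite !sum_upto_plus, sum_upto_scal, sum_upto_const.
  pose proof (sum_not_distinct_window w K). pose proof (sum_related_in_windows w K).
  pose proof (pos_INR K). fold l in H, H0.
  set (Bc := sum_upto (fun n => iverson (~ distinct_window w n)) K) in *.
  set (s := Nat.sqrt (K + l)) in *. set (X := INR (l * l + l * c * s)) in *.
  assert (INR K * Bc <= INR K * (INR l * (INR l * X))) by (apply Rmult_le_compat_l; auto).
  unfold variance_bound. rewrite !plus_INR, !mult_INR in *. fold X. simpl (INR 2) in *. lra.
Qed.

Definition good_frequency (w : list bool) (K : nat) (e : R) (om : nat -> bool) : Prop :=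
  Rabs (INR (occ_count (indicator (colouring c om)) w K) - INR K * (/ 2) ^ length w) <= e * INR K.

Lemma chebyshev_window_count w K M e : (K + length w < M)%nat -> (0 < K)%nat -> 0 < e ->
  expect M (fun om => iverson (~ good_frequency w K e om))
  <= INR K * INR (variance_bound (length w) (Nat.sqrt (K + length w))) / (e * INR K) ^ 2.
Proof.
  intros HM HK He.
  assert (HK' : 0 < INR K) by (apply lt_0_INR; auto).
  assert (Hp : 0 < (e * INR K) ^ 2) by (apply pow_lt; nra).
  eapply Rle_trans.
  - apply (expect_le M _ (fun om =>
      / (e * INR K) ^ 2 * (window_count w K om - INR K * (/ 2) ^ length w) ^ 2)).
    intros om. unfold good_frequency. rewrite occ_count_colouring.
    set (D := window_count w K om - INR K * (/ 2) ^ length w).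
    destruct (Classical_Prop.classic (Rabs D <= e * INR K)) as [G|G].
    + rewrite iverson_false by tauto.
      apply Rmult_le_pos; [left; apply Rinv_0_lt_compat; auto | apply pow2_ge_0].
    + rewrite iverson_true by auto. apply Rnot_le_lt in G.
      assert ((e * INR K) ^ 2 < D ^ 2).
      { rewrite <- (pow2_abs D). assert (0 < e * INR K) by nra. simpl. nra. }
      apply (Rmult_le_reg_l ((e * INR K) ^ 2)); auto.
      rewrite <- Rmult_assoc, Rinv_r by lra. lra.
  - rewrite expect_scal. unfold Rdiv. rewrite Rmult_comm.
    apply Rmult_le_compat_r; [left; apply Rinv_0_lt_compat; auto|].
    now apply variance_window_count.
Qed.

Definition variance_const (l : nat) : nat :=
  2 * (l * l * (l * l)) + (2 * (l * l * l * c) + 2 * (l * l)) * (1 + l).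

Lemma variance_bound_fourth_power l i : (1 <= i)%nat ->
  (variance_bound l (Nat.sqrt (i * i * (i * i) + l)) <= variance_const l * (i * i))%nat.
Proof.
  intros Hi.
  assert (Hs : (Nat.sqrt (i * i * (i * i) + l) <= i * i + l)%nat).
  { rewrite <- (Nat.sqrt_square (i * i + l)). apply Nat.sqrt_le_mono. nia. }
  set (s := Nat.sqrt _) in *. clearbody s. unfold variance_bound, variance_const.
  assert (1 <= i * i)%nat by nia.
  assert (s * (l * l * l * c + l * l) <= (i * i + l) * (l * l * l * c + l * l))%nat
    by (apply Nat.mul_le_mono_r; auto).
  nia.
Qed.

Lemma expect_not_good_frequency w m i M : (1 <= i)%nat -> (i * i * (i * i) + length w < M)%nat ->
  expect M (fun om => iverson (~ good_frequency w (i * i * (i * i)) (/ (INR m + 1)) om))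
  <= (INR m + 1) ^ 2 * INR (variance_const (length w)) / INR (i * i).
Proof.
  intros Hi HM.
  assert (Hm : 0 < INR m + 1) by (pose proof (pos_INR m); lra).
  assert (Hii : 0 < INR (i * i)) by (apply lt_0_INR; nia).
  eapply Rle_trans; [apply chebyshev_window_count; auto; [nia | apply Rinv_0_lt_compat; auto]|].
  pose proof (variance_bound_fourth_power (length w) i Hi) as HW. apply le_INR in HW.
  rewrite mult_INR in HW |- *.
  set (W := INR (variance_bound _ _)) in *. set (B := INR (variance_const _)) in *.
  set (q := INR (i * i)) in *.
  replace (q * q * W / (/ (INR m + 1) * (q * q)) ^ 2) with ((INR m + 1) ^ 2 * (W / (q * q)))
    by (field; lra).
  unfold Rdiv at 2. rewrite Rmult_assoc. apply Rmult_le_compat_l; [nra|].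
  apply (Rmult_le_reg_r (q * q)); [nra|].
  replace (W / (q * q) * (q * q)) with W by (field; lra).
  replace (B * / q * (q * q)) with (B * q) by (field; lra). lra.
Qed.

End Windows.

Lemma forallb_ext_in {A} (f g : A -> bool) l :
  (forall x, In x l -> f x = g x) -> forallb f l = forallb g l.
Proof. induction l; simpl; intros H; auto. rewrite H, IHl; auto. Qed.

Lemma occ_count_ext s s' w K : (forall t, (t < K + length w)%nat -> s t = s' t) ->
  occ_count s w K = occ_count s' w K.
Proof.
  intros H. unfold occ_count. f_equal. apply filter_ext_in. intros n Hn. apply in_seq in Hn.
  unfold occurs_atb. apply forallb_ext_in. intros j Hj. apply in_seq in Hj.
  rewrite H; [reflexivity | lia].
Qed.

Lemma occ_count_add s w K d :
  (occ_count s w K <= occ_count s w (K + d) <= occ_count s w K + d)%nat.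
Proof.
  unfold occ_count. rewrite seq_app, filter_app, length_app.
  pose proof (filter_length_le (occurs_atb s w) (seq (0 + K) d)). rewrite length_seq in H. lia.
Qed.

Fixpoint all_words (l : nat) : list (list bool) :=
  match l with
  | O => [[]]
  | S l' => map (cons false) (all_words l') ++ map (cons true) (all_words l')
  end.

Lemma all_words_length l : length (all_words l) = (2 ^ l)%nat.
Proof. induction l; simpl; auto. rewrite length_app, !length_map, IHl. lia. Qed.

Lemma in_all_words w : In w (all_words (length w)).
Proof.
  induction w as [|b w IH]; simpl; auto.
  apply in_or_app. destruct b; [right | left]; now apply in_map.
Qed.

Lemma length_in_all_words l w : In w (all_words l) -> length w = l.
Proof.
  revert w; induction l; simpl; intros w H.
  - now destruct H as [<-|[]].
  - apply in_app_or in H as [H|H]; apply in_map_iff in H as [v [<- Hv]]; simpl; f_equal; auto.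
Qed.

Lemma inv_sqr_le_telescope n : (2 <= n)%nat -> / INR (n * n) <= / INR (n - 1) - / INR n.
Proof.
  intros Hn. assert (Hn1 : 1 <= INR (n - 1)) by (apply (le_INR 1); lia).
  assert (En : INR n = INR (n - 1) + 1) by (rewrite <- S_INR; f_equal; lia).
  rewrite mult_INR, En.
  apply (Rmult_le_reg_r (INR (n - 1) * (INR (n - 1) + 1) * (INR (n - 1) + 1))); [nra|].
  field_simplify; lra.
Qed.

Lemma sum_inv_sqr_tail a n : (2 <= a)%nat ->
  sum_upto (fun i => if Nat.leb a i then / INR (i * i) else 0) n <= / INR (a - 1).
Proof.
  intros Ha.
  enough (H : sum_upto (fun i => if Nat.leb a i then / INR (i * i) else 0) n
              <= / INR (a - 1) - / INR (Nat.max a n - 1)).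
  { pose proof (Rinv_0_lt_compat (INR (Nat.max a n - 1)) ltac:(apply lt_0_INR; lia)). lra. }
  induction n as [|n IH]; cbn [sum_upto].
  { replace (Nat.max a 0) with a by lia. lra. }
  destruct (Nat.leb_spec a n) as [Han|Han].
  - replace (Nat.max a (S n)) with (S n) by lia. replace (Nat.max a n) with n in IH by lia.
    pose proof (inv_sqr_le_telescope n ltac:(lia)). replace (S n - 1)%nat with n by lia. lra.
  - replace (Nat.max a (S n)) with a by lia. replace (Nat.max a n) with a in IH by lia. lra.
Qed.

Lemma sum_pow_half_le n : sum_upto (fun k => (/ 2) ^ k) n <= 2.
Proof.
  enough (H : sum_upto (fun k => (/ 2) ^ k) n = 2 - 2 * (/ 2) ^ n).
  { pose proof (pow_half_bounds n). lra. }
  induction n; simpl; [lra|]. rewrite IHn. lra.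
Qed.

(** * A colouring with good frequencies *)

Section GoodColouring.

Variable c : nat.
Hypothesis c_pos : (0 < c)%nat.

Definition freq_threshold (l m : nat) : nat :=
  (2 ^ l * ((m + 1) * (m + 1)) * variance_const c l * 2 ^ (l + m + 3) + 2)%nat.

(* Only finitely many requirements, so a union bound over [bits_needed M] bits applies. *)
Definition good_upto (M : nat) (om : nat -> bool) : Prop :=
  forall l m i, (l <= M)%nat -> (m <= M)%nat -> (freq_threshold l m <= i <= M)%nat ->
  forall w, length w = l -> good_frequency c w (i * i * (i * i)) (/ (INR m + 1)) om.

Definition bits_needed (M : nat) : nat := (M * M * (M * M) + M + 1)%nat.

Definition failure_count (M l m i : nat) (om : nat -> bool) : R :=
  if Nat.leb (freq_threshold l m) i then
    sum_upto (fun t => iverson (~ good_frequency c (nth t (all_words l) [])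
                                   (i * i * (i * i)) (/ (INR m + 1)) om)) (2 ^ l)
  else 0.

Definition failure_weight (M : nat) (om : nat -> bool) : R :=
  sum_upto (fun l => sum_upto (fun m => sum_upto (fun i =>
    failure_count M l m i om) (S M)) (S M)) (S M).

Lemma failure_count_nonneg M l m i om : 0 <= failure_count M l m i om.
Proof.
  unfold failure_count. destruct (Nat.leb _ _); [|lra].
  apply sum_upto_nonneg; intros; apply iverson_bounds.
Qed.

Lemma failure_weight_ge1 M om : ~ good_upto M om -> 1 <= failure_weight M om.
Proof.
  intros H.
  assert (exists l m i w, (l <= M)%nat /\ (m <= M)%nat /\ (freq_threshold l m <= i <= M)%nat /\
            length w = l /\ ~ good_frequency c w (i * i * (i * i)) (/ (INR m + 1)) om)
    as (l & m & i & w & H1 & H2 & H3 & <- & H5).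
  { apply Classical_Prop.NNPP. intros Hn. apply H. intros l m i H1 H2 H3 w H4.
    apply Classical_Prop.NNPP. intros H5. apply Hn. exists l, m, i, w. tauto. }
  destruct (In_nth _ _ [] (in_all_words w)) as [t [Ht Hnth]]. rewrite all_words_length in Ht.
  assert (Hnn : forall k k', 0 <= sum_upto (fun i => failure_count M k k' i om) (S M))
    by (intros; apply sum_upto_nonneg; intros; apply failure_count_nonneg).
  unfold failure_weight.
  eapply Rle_trans; [|apply (le_sum_upto _ _ (length w)); [intros; apply sum_upto_nonneg; auto | lia]].
  eapply Rle_trans; [|apply (le_sum_upto _ _ m); [intros; apply Hnn | lia]].
  eapply Rle_trans; [|apply (le_sum_upto _ _ i); [intros; apply failure_count_nonneg | lia]].
  unfold failure_count. destruct (Nat.leb_spec (freq_threshold (length w) m) i); [|lia].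
  eapply Rle_trans; [|apply (le_sum_upto _ _ t); [intros; apply iverson_bounds | auto]].
  cbv beta. rewrite Hnth, iverson_true; auto. lra.
Qed.

Lemma expect_failure_count_le M l m i : (l <= M)%nat -> (i <= M)%nat ->
  expect (bits_needed M) (failure_count M l m i)
  <= INR (2 ^ l * ((m + 1) * (m + 1)) * variance_const c l) *
     (if Nat.leb (freq_threshold l m) i then / INR (i * i) else 0).
Proof.
  intros Hl Hi. unfold failure_count.
  destruct (Nat.leb_spec (freq_threshold l m) i) as [Hi0|Hi0]; [|rewrite expect_const; lra].
  assert (Hthr : (2 <= freq_threshold l m)%nat) by (unfold freq_threshold; lia).
  assert (Hlen : forall t, (t < 2 ^ l)%nat -> length (nth t (all_words l) []) = l).
  { intros t Ht. apply length_in_all_words, nth_In. now rewrite all_words_length. }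
  rewrite expect_sum_upto.
  eapply Rle_trans.
  { apply sum_upto_le. intros t Ht. apply expect_not_good_frequency; [exact c_pos | lia |].
    rewrite Hlen by auto. unfold bits_needed.
    assert (i * i * (i * i) <= M * M * (M * M))%nat
      by (apply Nat.mul_le_mono; apply Nat.mul_le_mono; lia).
    lia. }
  rewrite (sum_upto_ext _ (fun _ => (INR m + 1) ^ 2 * INR (variance_const c l) / INR (i * i)))
    by (intros t Ht; now rewrite Hlen).
  rewrite sum_upto_const, !mult_INR, pow_INR, plus_INR. simpl (INR 1). simpl (INR 2).
  right. unfold Rdiv. ring.
Qed.

(* The threshold makes the tail [sum_(i >= threshold) 1/i^2] small enough to pay for
   all [2^l] words at precision [1/(m+1)], with room [2^-(l+m+3)] to sum over [l] and [m]. *)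
Lemma sum_expect_failure_count M l m : (l <= M)%nat ->
  sum_upto (fun i => expect (bits_needed M) (failure_count M l m i)) (S M) <= (/ 2) ^ (l + m + 3).
Proof.
  intros Hl. set (X := (2 ^ l * ((m + 1) * (m + 1)) * variance_const c l)%nat).
  eapply Rle_trans.
  { apply sum_upto_le. intros i Hi. apply expect_failure_count_le; lia. }
  rewrite sum_upto_scal. fold X.
  assert (Hthr : (2 <= freq_threshold l m)%nat) by (unfold freq_threshold; lia).
  eapply Rle_trans; [apply Rmult_le_compat_l; [apply pos_INR | apply sum_inv_sqr_tail, Hthr]|].
  unfold freq_threshold. fold X.
  replace (X * 2 ^ (l + m + 3) + 2 - 1)%nat with (X * 2 ^ (l + m + 3) + 1)%nat by lia.
  rewrite plus_INR, mult_INR, pow_INR, pow_inv.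
  replace (INR 2) with 2 by (simpl; lra). replace (INR 1) with 1 by reflexivity.
  assert (Hp : 0 < 2 ^ (l + m + 3)) by (apply pow_lt; lra).
  pose proof (pos_INR X). set (P := 2 ^ (l + m + 3)) in *.
  assert (HXP : 0 < INR X * P + 1) by nra.
  apply (Rmult_le_reg_l (P * (INR X * P + 1))); [nra|].
  replace (P * (INR X * P + 1) * (INR X * / (INR X * P + 1))) with (INR X * P)
    by (field; apply Rgt_not_eq; exact HXP).
  replace (P * (INR X * P + 1) * / P) with (INR X * P + 1)
    by (field; apply Rgt_not_eq; exact Hp).
  lra.
Qed.

Lemma expect_failure_weight_le M : expect (bits_needed M) (failure_weight M) <= / 2.
Proof.
  unfold failure_weight. rewrite expect_sum_upto.
  eapply Rle_trans with (sum_upto (fun l => sum_upto (fun m => (/ 2) ^ (l + m + 3)) (S M)) (S M)).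
  { apply sum_upto_le. intros l Hl. rewrite expect_sum_upto.
    apply sum_upto_le. intros m Hm. rewrite expect_sum_upto.
    apply sum_expect_failure_count; lia. }
  set (F := sum_upto (fun m => (/ 2) ^ m) (S M)).
  rewrite (sum_upto_ext _ (fun l => (/ 8 * F) * (/ 2) ^ l)).
  2:{ intros l _. replace (/ 8 * F * (/ 2) ^ l) with ((/ 8 * (/ 2) ^ l) * F) by ring.
      unfold F. rewrite <- sum_upto_scal. apply sum_upto_ext. intros m _. rewrite !pow_add. simpl. lra. }
  rewrite sum_upto_scal. assert (F <= 2) by apply sum_pow_half_le.
  assert (0 <= F) by (apply sum_upto_nonneg; intros; apply Rlt_le, pow_half_bounds).
  change (sum_upto (pow (/ 2)) (S M)) with F. nra.
Qed.

Lemma good_upto_exists M : exists om, good_upto M om.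
Proof.
  apply (exists_of_expect_lt (bits_needed M) _ (failure_weight M)).
  - apply failure_weight_ge1.
  - pose proof (expect_failure_weight_le M). lra.
Qed.

Lemma good_upto_mono M M' om : (M <= M')%nat -> good_upto M' om -> good_upto M om.
Proof. intros H HP l m i H1 H2 H3 w H4. apply (HP l m i); auto; lia. Qed.

Lemma good_upto_ext M om om' : (forall j, (j < bits_needed M)%nat -> om j = om' j) ->
  good_upto M om -> good_upto M om'.
Proof.
  intros Hag HP l m i H1 H2 H3 w H4. specialize (HP l m i H1 H2 H3 w H4).
  unfold good_frequency in *. rewrite <- (occ_count_ext (indicator (colouring c om))); auto.
  intros t Ht. unfold indicator, colouring. rewrite Hag; auto.
  destruct (class_rep_spec c (S t) ltac:(lia)) as (_ & Hle & _).
  assert (i * i * (i * i) <= M * M * (M * M))%nat by (apply Nat.mul_le_mono; apply Nat.mul_le_mono; lia).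
  unfold bits_needed. lia.
Qed.

(* König's lemma: bits are fixed one at a time, keeping the prefix extendable to
   colourings satisfying any finite stage [good_upto M]. *)
Definition extendable (L : nat) (p : nat -> bool) : Prop :=
  forall M, exists om, (forall j, (j < L)%nat -> om j = p j) /\ good_upto M om.

Lemma extendable_step L p : extendable L p ->
  extendable (S L) (upd p L false) \/ extendable (S L) (upd p L true).
Proof.
  intros H. apply Classical_Prop.NNPP. intros Hn.
  apply Classical_Prop.not_or_and in Hn as [H0 H1].
  apply Classical_Pred_Type.not_all_ex_not in H0 as [M0 H0], H1 as [M1 H1].
  destruct (H (Nat.max M0 M1)) as [om [Hag HP]].
  assert (Hext : forall j, (j < S L)%nat -> om j = upd p L (om L) j).
  { intros j Hj. unfold upd. destruct (Nat.eqb_spec j L) as [->|]; auto. apply Hag; lia. }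
  destruct (om L) eqn:E; [apply H1 | apply H0]; exists om;
    split; auto; apply (good_upto_mono _ (Nat.max M0 M1)); auto; lia.
Qed.

Fixpoint good_prefix (L : nat) : nat -> bool :=
  match L with
  | O => fun _ => false
  | S L' => if excluded_middle_informative (extendable (S L') (upd (good_prefix L') L' false))
            then upd (good_prefix L') L' false else upd (good_prefix L') L' true
  end.

Lemma good_prefix_extendable L : extendable L (good_prefix L).
Proof.
  induction L; simpl.
  - intros M. destruct (good_upto_exists M) as [om Hom]. exists om. split; auto. intros; lia.
  - destruct (excluded_middle_informative _) as [E|E]; auto.
    destruct (extendable_step L (good_prefix L) IHL); tauto.
Qed.

Lemma good_prefix_stable L L' j : (j < L)%nat -> (L <= L')%nat -> good_prefix L' j = good_prefix L j.
Proof.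
  intros H H'. induction H'; auto. rewrite <- IHH'. simpl.
  destruct (excluded_middle_informative _); unfold upd; destruct (Nat.eqb_spec j m); auto; lia.
Qed.

Definition good_bits (j : nat) : bool := good_prefix (S j) j.

Lemma good_bits_good_upto M : good_upto M good_bits.
Proof.
  destruct (good_prefix_extendable (bits_needed M) M) as [om [Hag HP]].
  apply (good_upto_ext M om); auto.
  intros j Hj. rewrite Hag; auto. unfold good_bits. apply good_prefix_stable; lia.
Qed.

End GoodColouring.

Lemma good_bits_frequency c w m i : (0 < c)%nat -> (freq_threshold c (length w) m <= i)%nat ->
  good_frequency c w (i * i * (i * i)) (/ (INR m + 1)) (good_bits c).
Proof.
  intros Hc Hi.
  apply (good_bits_good_upto c Hc (Nat.max (length w) (Nat.max m i)) (length w) m i); auto; lia.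
Qed.

Lemma frequency_interpolate (occK occN K N : nat) mu e d : 0 <= mu <= 1 -> (K <= N)%nat ->
  (occK <= occN <= occK + (N - K))%nat -> Rabs (INR occK - INR K * mu) <= e * INR K ->
  (0 < N)%nat -> INR (N - K) <= d * INR N -> 0 <= e ->
  Rabs (INR occN / INR N - mu) <= e + 2 * d.
Proof.
  intros Hmu HKN Hocc HK HN Hd He.
  assert (HN' : 0 < INR N) by (apply lt_0_INR; auto).
  replace (INR occN / INR N - mu) with ((INR occN - INR N * mu) / INR N) by (field; lra).
  unfold Rdiv. rewrite Rabs_mult, Rabs_inv, (Rabs_right (INR N)) by lra.
  apply (Rmult_le_reg_r (INR N)); auto. rewrite Rmult_assoc, Rinv_l, Rmult_1_r by lra.
  assert (H1 : INR occK <= INR occN) by (apply le_INR; lia).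
  assert (H2 : INR occN <= INR occK + INR (N - K)) by (rewrite <- plus_INR; apply le_INR; lia).
  assert (H3 : INR N = INR K + INR (N - K)) by (rewrite <- plus_INR; f_equal; lia).
  assert (H4 : INR K <= INR N) by (apply le_INR; auto).
  pose proof (pos_INR (N - K)).
  apply Rabs_le. apply Rabs_le_between in HK. split; nra.
Qed.

Lemma fourth_root_spec N : let i := Nat.sqrt (Nat.sqrt N) in
  (i * i * (i * i) <= N < (i + 1) * (i + 1) * ((i + 1) * (i + 1)))%nat.
Proof.
  intros i. pose proof (Nat.sqrt_spec N ltac:(lia)) as [A1 A2].
  pose proof (Nat.sqrt_spec (Nat.sqrt N) ltac:(lia)) as [B1 B2]. fold i in B1, B2.
  set (s := Nat.sqrt N) in *. clearbody i s. split.
  - assert (i * i * (i * i) <= s * s)%nat by (apply Nat.mul_le_mono; auto). lia.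
  - assert (S s <= (i + 1) * (i + 1))%nat by lia.
    assert (S s * S s <= (i + 1) * (i + 1) * ((i + 1) * (i + 1)))%nat by (apply Nat.mul_le_mono; auto).
    lia.
Qed.

Lemma fourth_power_gap N : (1 <= N)%nat -> let i := Nat.sqrt (Nat.sqrt N) in
  (1 <= i)%nat /\ INR (N - i * i * (i * i)) <= 15 / INR i * INR N.
Proof.
  intros HN i. pose proof (fourth_root_spec N) as [R1 R2]. fold i in R1, R2.
  assert (Hi : (1 <= i)%nat) by (destruct i; [simpl in R2; lia | lia]).
  split; [exact Hi|].
  assert (Hi0 : 0 < INR i) by (apply lt_0_INR; lia).
  apply (Rmult_le_reg_r (INR i)); auto.
  replace (15 / INR i * INR N * INR i) with (INR (15 * N)) by (rewrite mult_INR; simpl; field; lra).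
  rewrite <- mult_INR. apply le_INR. clearbody i. nia.
Qed.

Theorem colouring_good_bits_normal c : (0 < c)%nat -> normal_set (colouring c (good_bits c)).
Proof.
  intros Hc w. set (s := indicator (colouring c (good_bits c))).
  apply is_lim_seq_spec. intros [eps Heps]. simpl.
  destruct (INR_unbounded (3 / eps)) as [m Hm].
  destruct (INR_unbounded (90 / eps)) as [j Hj].
  set (i1 := Nat.max (freq_threshold c (length w) m) (Nat.max j 1)).
  exists (i1 * i1 * (i1 * i1))%nat. intros N HN.
  assert (Hi1 : (i1 <= Nat.sqrt (Nat.sqrt N))%nat)
    by (do 2 apply (proj1 (Nat.sqrt_le_square _ _)); exact HN).
  assert (Hi1' : (1 <= i1)%nat) by (unfold i1; lia).
  destruct (fourth_power_gap N ltac:(nia)) as [Hi Hgap].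
  pose proof (fourth_root_spec N) as [R1 _].
  set (i := Nat.sqrt (Nat.sqrt N)) in *. set (K := (i * i * (i * i))%nat) in *.
  pose proof (good_bits_frequency c w m i Hc ltac:(lia)) as Hfreq.
  pose proof (occ_count_add s w K (N - K)) as Hadd. replace (K + (N - K))%nat with N in Hadd by lia.
  assert (Hm0 : 0 < INR m + 1) by (pose proof (pos_INR m); lra).
  assert (He : / (INR m + 1) < eps / 3).
  { apply (Rmult_lt_reg_r (INR m + 1)); auto. rewrite Rinv_l by lra.
    apply (Rmult_lt_reg_r (3 / eps)); [apply Rdiv_lt_0_compat; lra|].
    replace (eps / 3 * (INR m + 1) * (3 / eps)) with (INR m + 1) by (field; lra). lra. }
  assert (Hd : 15 / INR i <= eps / 6).
  { assert (Hi0 : 0 < INR i) by (apply lt_0_INR; lia).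
    assert (INR j <= INR i) by (apply le_INR; lia).
    apply (Rmult_le_reg_r (INR i)); auto. replace (15 / INR i * INR i) with 15 by (field; lra).
    assert (90 / eps * eps = 90) by (field; lra). nra. }
  rewrite <- pow_inv. eapply Rle_lt_trans.
  - apply (frequency_interpolate (occ_count s w K) (occ_count s w N) K N _
             (/ (INR m + 1)) (15 / INR i));
      auto; try lia.
    + pose proof (pow_half_bounds (length w)); lra.
    + apply Rlt_le, Rinv_0_lt_compat; lra.
  - lra.
Qed.

Theorem mainTheorem17 (c k : nat) (hc : (1 <= c)%nat) (hk : (1 <= k)%nat)
  (hsq : ~ is_perfect_square c) (heven : Nat.Even k) :
  exists A : nat -> bool,
    normal_set A /\
    forall x y n : nat, (1 <= x)%nat -> (1 <= y)%nat -> (1 <= n)%nat ->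
      A x = true -> A y = true -> (x * y <> c * n ^ k)%nat.
Proof.
  exists (colouring c (good_bits c)). split; [apply colouring_good_bits_normal; lia|].
  intros x y n Hx Hy _ Ax Ay E. destruct heven as [h ->].
  apply (colouring_no_square_product c (good_bits c) x y); auto; try lia.
  rewrite E, Nat.pow_mul_r, Nat.pow_2_r, Nat.pow_mul_l.
  replace (c * (n ^ h * n ^ h) * c)%nat with ((c * n ^ h) * (c * n ^ h))%nat by ring.
  apply is_square_sqr.
Qed.
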